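(* For positive integers $a,b$ define $$c_l(a,a+1;b)=1+\frac{1}{a+2[b,a+1,b]},\quad c_r(a,a+1;b)=1+\frac{1}{a+2[b+1,a]},$$ $$c_l(a;b,b+1)=1+\frac{1}{b+2[a,b+1,a]},\quad c_r(a;b,b+1)=1+\frac{1}{b+2[a+1,b]}.$$ Then for every integer $a\ge1$, $$c_l(a,a+1;2a+1)>c_r(a;2a+1,2a+2)^2,$$ and for every integer $a\ge2$, $$c_r(a,a+1;2a)<c_l(a;2a,2a+1)^2.$$
   Context: $[x_1,\ldots,x_k]$ denotes the finite continued fraction $\cfrac{1}{x_1+\cfrac{1}{\ddots+\cfrac1{x_k}}}$. (In the paper these inequalities are the defining conditions for the $(1,2)$-variations $((a\to a+1),(2a+2\to2a+1),(2a+2\to2a+1))$ and $((a+1\to a),(2a\to2a+1),(2a\to2a+1))$ to be ''absolutely increasing''.) *)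

From mathcomp Require Import all_boot all_order all_algebra.
Set Implicit Arguments. Unset Strict Implicit. Unset Printing Implicit Defensive.
Import Order.TTheory GRing.Theory Num.Theory.
Local Open Scope ring_scope.

(* cf [:: x1; ...; xk] = 1/(x1 + 1/(... + 1/xk)); cf [::] = 0, so that
   cf (x :: s) = 1 / (x + cf s) and cf [:: x] = 1/x. *)
Fixpoint cf (s : seq rat) : rat :=
  match s with
  | [::] => 0
  | x :: s' => (x + cf s')^-1
  end.

Definition cl1 (a b : nat) : rat :=
  1 + (a%:R + 2 * cf [:: b%:R; a.+1%:R; b%:R])^-1.
Definition cr1 (a b : nat) : rat :=
  1 + (a%:R + 2 * cf [:: b.+1%:R; a%:R])^-1.
Definition cl2 (a b : nat) : rat :=
  1 + (b%:R + 2 * cf [:: a%:R; b.+1%:R; a%:R])^-1.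
Definition cr2 (a b : nat) : rat :=
  1 + (b%:R + 2 * cf [:: a.+1%:R; b%:R])^-1.

(* The continued fractions involved have closed forms, [x, y] = y / (x y + 1)
   and [x, y, x] = (x y + 1) / (x (x y + 2)), so every constant is 1 + p / q
   with explicit polynomials p, q in a.  Clearing the positive denominators
   turns each inequality into a polynomial inequality in a, and after the
   shift a = t + 1 (resp. a = t + 2) the difference of its two sides is a
   polynomial in t with positive coefficients. *)

From mathcomp Require Import all_boot all_order all_algebra.
From mathcomp Require Import ring lra.
Import Order.TTheory GRing.Theory Num.Theory.
Local Open Scope ring_scope.

Lemma sqr_one_add_div_lt (R : realFieldType) (p q r s : R) :
  0 < q -> 0 < s -> (q + p) ^+ 2 * s < q ^+ 2 * (s + r) ->
  (1 + p / q) ^+ 2 < 1 + r / s.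
Proof.
move=> q0 s0 lt; rewrite -subr_gt0.
have -> : 1 + r / s - (1 + p / q) ^+ 2 =
          (q ^+ 2 * (s + r) - (q + p) ^+ 2 * s) / (q ^+ 2 * s).
  by field; rewrite !gt_eqF.
by rewrite divr_gt0 ?subr_gt0 ?mulr_gt0 ?exprn_gt0.
Qed.

Lemma one_add_div_lt_sqr (R : realFieldType) (p q r s : R) :
  0 < q -> 0 < s -> (q + p) * s ^+ 2 < q * (s + r) ^+ 2 ->
  1 + p / q < (1 + r / s) ^+ 2.
Proof.
move=> q0 s0 lt; rewrite -subr_gt0.
have -> : (1 + r / s) ^+ 2 - (1 + p / q) =
          (q * (s + r) ^+ 2 - (q + p) * s ^+ 2) / (q * s ^+ 2).
  by field; rewrite !gt_eqF.
by rewrite divr_gt0 ?subr_gt0 ?mulr_gt0 ?exprn_gt0.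
Qed.

Lemma cf_pairE (x y : rat) : 0 < x -> 0 < y -> cf [:: x; y] = y / (x * y + 1).
Proof. by move=> x0 y0; rewrite /= addr0; field; rewrite !gt_eqF //; nra. Qed.

Lemma cf_palindromeE (x y : rat) :
  0 < x -> 0 < y -> cf [:: x; y; x] = (x * y + 1) / (x * (x * y + 2)).
Proof.
move=> x0 y0; rewrite [LHS]/= -/(cf [:: y; x]) cf_pairE //.
by field; rewrite !gt_eqF //; nra.
Qed.

Lemma one_add_inv_pairE (x y : rat) : 0 < x -> 0 < y ->
  1 + (y + 2 * cf [:: x; y])^-1 = 1 + (x * y + 1) / (y * (x * y + 3)).
Proof.
move=> x0 y0; rewrite cf_pairE //; congr (1 + _).
by field; rewrite !gt_eqF //; nra.
Qed.

Lemma one_add_inv_palindromeE (u x y : rat) : 0 <= u -> 0 < x -> 0 < y ->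
  1 + (u + 2 * cf [:: x; y; x])^-1 =
  1 + x * (x * y + 2) / (u * x * (x * y + 2) + 2 * (x * y + 1)).
Proof.
move=> u0 x0 y0; rewrite cf_palindromeE //; congr (1 + _).
have den_gt0 : 0 < u * x * (x * y + 2) + 2 * (x * y + 1).
  by rewrite ltr_wpDl ?mulr_ge0 ?(ltW x0) //; nra.
by field; rewrite !gt_eqF //; nra.
Qed.

(* The cleared difference is 1270 + 6656 t + 13811 t^2 + ... + 16 t^8. *)
Lemma cr2_sqr_lt_cl1 (a : nat) :
  (0 < a)%N -> cr2 a (2 * a + 1) ^+ 2 < cl1 a (2 * a + 1).
Proof.
rewrite /cr2 /cl1 -(ler1n rat) natrD natrM -(natr1 (R := rat) a) => a1.
rewrite one_add_inv_pairE ?one_add_inv_palindromeE; try lra.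
apply: sqr_one_add_div_lt; [nra | nra |].
move: (a%:R) a1 => x x1.
have [t t0 ->] : exists2 t, 0 <= t & x = t + 1 by exists (x - 1); lra.
nra.
Qed.

(* The cleared difference is 9076 + 38916 t + 71724 t^2 + ... + 8 t^9. *)
Lemma cr1_lt_cl2_sqr (a : nat) :
  (1 < a)%N -> cr1 a (2 * a) < cl2 a (2 * a) ^+ 2.
Proof.
rewrite /cr1 /cl2 -(ler_nat rat) natrM -(natr1 (R := rat) (2 * a)) natrM => a2.
rewrite one_add_inv_pairE ?one_add_inv_palindromeE; try lra.
apply: one_add_div_lt_sqr; [nra | nra |].
move: (a%:R) a2 => x x2.
have [t t0 ->] : exists2 t, 0 <= t & x = t + 2 by exists (x - 2); lra.
nra.
Qed.

Theorem lemma13 :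
  (forall a : nat, (1 <= a)%N ->
     cl1 a (2 * a + 1) > cr2 a (2 * a + 1) ^+ 2) /\
  (forall a : nat, (2 <= a)%N ->
     cr1 a (2 * a) < cl2 a (2 * a) ^+ 2).
Proof. by split; [exact: cr2_sqr_lt_cl1 | exact: cr1_lt_cl2_sqr]. Qed.
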